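(* Let $\mathsf M$ be an oriented matroid with tope-pairs poset $\mathcal Q$, and let $\rho:\mathcal Q\to\mathcal Q$, $\rho(R,T)=(-T,R)$. Then $n\mapsto\rho^n$ defines an action of $\mathbb Z_4$ on the order complex $\Delta(\mathcal Q)$ by simplicial automorphisms, and hence a simplicial action of $\mathbb Z_4$ on $|\mathcal Q|$.
   Context: Topes of an oriented matroid on ground set $E$ are its maximal covectors, sign vectors in $\{+,-,0\}^E$; $-T$ is componentwise negation. The separating set is $S(X,Y)=\{e\in E: X_e=-Y_e\neq0\}$; for a tope $B$, $T\le_B R$ iff $S(B,T)\subseteq S(B,R)$. The tope-pairs poset $\mathcal Q$ is $\mathcal T\times\mathcal T$ ($\mathcal T$ the set of topes) with $(T,R)\le(T',R')$ iff $T\le_{T'}R\le_{T'}R'$. $\Delta(\mathcal Q)$ is the abstract simplicial complex whose simplices are the chains of $\mathcal Q$, and $|\mathcal Q|$ is its geometric realization. *)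

From HB Require Import structures.
From mathcomp Require Import all_boot all_order all_algebra.
From mathcomp Require Import reals.
Set Implicit Arguments. Unset Strict Implicit. Unset Printing Implicit Defensive.
Import Order.TTheory GRing.Theory Num.Theory.

(* Signs {+,-,0} are encoded as option bool:
   Some true = +, Some false = -, None = 0. *)
Definition signvec (E : finType) := {ffun E -> option bool}.

Section SignVectors.
Variable E : finType.

Definition zerov : signvec E := [ffun => None].
Definition negv (X : signvec E) : signvec E := [ffun e => omap negb (X e)].
Definition compv (X Y : signvec E) : signvec E :=
  [ffun e => if X e is Some b then Some b else Y e].
Definition sep (X Y : signvec E) : {set E} :=
  [set e | (X e != None) && (X e == omap negb (Y e))].
Definition conf_le (X Y : signvec E) : bool :=
  [forall e, (X e == None) || (X e == Y e)].
End SignVectors.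

(* Oriented matroid on the ground set E, given by its set of covectors
   (covector axioms (V0)-(V3)). *)
Record oriented_matroid (E : finType) := OrientedMatroid {
  covectors : {set signvec E};
  om_zero : zerov E \in covectors;
  om_neg : forall X, X \in covectors -> negv X \in covectors;
  om_comp : forall X Y, X \in covectors -> Y \in covectors ->
                        compv X Y \in covectors;
  om_elim : forall X Y e, X \in covectors -> Y \in covectors -> e \in sep X Y ->
     exists2 Z, Z \in covectors &
       Z e = None /\ (forall f, f \notin sep X Y -> Z f = compv X Y f)
}.

Section TopePairs.
Variables (E : finType) (M : oriented_matroid E).

Definition topes : {set signvec E} :=
  [set T in covectors M |
     [forall X in covectors M, conf_le T X ==> (X == T)]].

Definition tope_le (B T R : signvec E) : bool := sep B T \subset sep B R.

Definition QV : {set signvec E * signvec E} := setX topes topes.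

Definition Qle (p q : signvec E * signvec E) : bool :=
  tope_le q.1 p.1 p.2 && tope_le q.1 p.2 q.2.

(* simplices of the order complex Delta(Q): the chains of Q *)
Definition is_chain (C : {set signvec E * signvec E}) : bool :=
  (C \subset QV) && [forall p in C, forall q in C, Qle p q || Qle q p].

Definition rho (p : signvec E * signvec E) : signvec E * signvec E :=
  (negv p.2, p.1).

Definition rho_act (n : 'Z_4) := iter n rho.
End TopePairs.

Definition simplicial_automorphism (T : finType) (V : {set T})
    (simplex : {set T} -> bool) (f : T -> T) : Prop :=
  [/\ {in V, forall x, f x \in V}, {in V &, injective f} &
      forall C : {set T}, C \subset V -> simplex (f @: C) = simplex C].

Local Open Scope ring_scope.

(* Geometric realization |K| of an abstract simplicial complex K whose
   vertices lie in a finite type T: points are barycentric weight functions,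
   nonnegative, summing to 1, with support a simplex. *)
Definition in_realization (R : realType) (T : finType)
    (simplex : {set T} -> bool) (x : {ffun T -> R}) : Prop :=
  [/\ forall v, 0 <= x v, \sum_v x v = 1 & simplex [set v | x v != 0]].

(* the affine extension |f| of a vertex map f (linear on each simplex) *)
Definition realize_map (R : realType) (T : finType) (f : T -> T)
    (x : {ffun T -> R}) : {ffun T -> R} :=
  [ffun w => \sum_(v | f v == w) x v].

From mathcomp Require Import all_boot all_order all_algebra.
From mathcomp Require Import reals.
Import GRing.Theory Num.Theory.
Set Implicit Arguments. Unset Strict Implicit. Unset Printing Implicit Defensive.

(* All topes have the same zero set (T o T' is a covector above T) and -T is
   a tope, so a coordinatewise inspection of the separating sets shows
   (R,T) <= (R',T') iff rho(R',T') <= rho(R,T); hence rho maps chains to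
   chains.  As rho^4 = id, n |-> rho^n factors through Z/4.  On the
   realization, the pushforward of barycentric weights along a simplicial map
   is functorial and maps the support to its image. *)

Lemma negvK (E : finType) : involutive (@negv E).
Proof. by move=> X; apply/ffunP => e; rewrite !ffunE; case: (X e) => [[]|]. Qed.

Section Topes.
Variables (E : finType) (M : oriented_matroid E).

Lemma topes_negv T : T \in topes M -> negv T \in topes M.
Proof.
rewrite !inE => /andP[Tc /forall_inP Tmax]; rewrite om_neg //=.
apply/forall_inP => X Xc; apply/implyP => le_negT_X.
have le_T_negX : conf_le T (negv X).
  apply/forallP => e; move/forallP: le_negT_X => /(_ e); rewrite !ffunE.
  by case: (T e) => [[]|]; case: (X e) => [[]|].
by move/implyP: (Tmax _ (om_neg Xc)) => /(_ le_T_negX) /eqP <-; rewrite negvK.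
Qed.

Lemma topes_zero_sub T T' e :
  T \in topes M -> T' \in topes M -> T e = None -> T' e = None.
Proof.
rewrite !inE => /andP[Tc /forall_inP Tmax] /andP[T'c _] Te.
have le_T_comp : conf_le T (compv T T').
  by apply/forallP => f; rewrite ffunE; case: (T f) => [b|]; rewrite ?eqxx ?orbT.
move/implyP: (Tmax _ (om_comp Tc T'c)) => /(_ le_T_comp) /eqP/ffunP/(_ e).
by rewrite ffunE Te.
Qed.

Lemma topes_zero T T' e :
  T \in topes M -> T' \in topes M -> (T e == None) = (T' e == None).
Proof. by move=> TT TT'; apply/eqP/eqP; apply: topes_zero_sub. Qed.

End Topes.

Section SimplicialAutomorphism.
Variables (T : finType) (V : {set T}) (simplex : {set T} -> bool).

Lemma simplicial_automorphism_id : simplicial_automorphism V simplex id.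
Proof. by split=> // C _; rewrite imset_id. Qed.

Lemma simplicial_automorphism_comp f g :
  simplicial_automorphism V simplex f -> simplicial_automorphism V simplex g ->
  simplicial_automorphism V simplex (f \o g).
Proof.
move=> [fV f_inj f_simplex] [gV g_inj g_simplex]; split.
- by move=> x xV; apply/fV/gV.
- by move=> x y xV yV /(f_inj _ _ (gV _ xV) (gV _ yV)); apply: g_inj.
move=> C CV; have gCV : g @: C \subset V.
  by apply/subsetP => _ /imsetP[x xC ->]; apply/gV/(subsetP CV).
by rewrite imset_comp f_simplex // g_simplex.
Qed.

Lemma simplicial_automorphism_iter f k :
  simplicial_automorphism V simplex f -> simplicial_automorphism V simplex (iter k f).
Proof.
move=> f_auto; elim: k => [|k IHk]; first exact: simplicial_automorphism_id.
exact: simplicial_automorphism_comp f_auto IHk.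
Qed.

End SimplicialAutomorphism.

Section Realization.
Variables (R : realType) (T : finType).
Local Open Scope ring_scope.

Lemma realize_map_id (x : {ffun T -> R}) : realize_map id x = x.
Proof. by apply/ffunP => w; rewrite ffunE (big_pred1 w). Qed.

Lemma eq_realize_map (f g : T -> T) (x : {ffun T -> R}) :
  f =1 g -> realize_map f x = realize_map g x.
Proof.
by move=> eq_fg; apply/ffunP => w; rewrite !ffunE; apply: eq_bigl => v; rewrite eq_fg.
Qed.

Lemma realize_map_comp (f g : T -> T) (x : {ffun T -> R}) :
  realize_map (f \o g) x = realize_map f (realize_map g x).
Proof.
apply/ffunP => w; rewrite !ffunE.
rewrite (partition_big g (fun u => f u == w)) //=; apply: eq_bigr => u /eqP fu.
rewrite ffunE; apply: eq_bigl => v /=.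
by rewrite andbC; case: (eqVneq (g v) u) => [->|]; rewrite ?fu ?eqxx.
Qed.

Lemma realize_map_sum (f : T -> T) (x : {ffun T -> R}) :
  \sum_w realize_map f x w = \sum_v x v.
Proof.
rewrite [RHS](partition_big f xpredT) //; apply: eq_bigr => w _.
by rewrite ffunE.
Qed.

Lemma support_realize_map (f : T -> T) (x : {ffun T -> R}) :
  (forall v, 0 <= x v) ->
  [set w | realize_map f x w != 0] = f @: [set v | x v != 0].
Proof.
move=> x_ge0; apply/setP => w; rewrite inE ffunE psumr_eq0 => [|v _]; last exact: x_ge0.
apply/allPn/imsetP => [[v _]|[v]].
  by rewrite negb_imply => /andP[/eqP <- xv]; exists v; rewrite ?inE.
by rewrite inE => xv ->; exists v; rewrite ?mem_index_enum // eqxx.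
Qed.

Lemma in_realization_map (V : {set T}) (simplex : {set T} -> bool) f
    (x : {ffun T -> R}) :
  (forall C, simplex C -> C \subset V) -> simplicial_automorphism V simplex f ->
  in_realization simplex x -> in_realization simplex (realize_map f x).
Proof.
move=> simplexV [_ _ f_simplex] [x_ge0 x_sum1 x_simplex]; split.
- by move=> w; rewrite ffunE sumr_ge0.
- by rewrite realize_map_sum.
by rewrite support_realize_map // f_simplex // simplexV.
Qed.

End Realization.

Section Rho.
Variable E : finType.
Local Notation rho := (@rho E).

Lemma rho_inj : injective rho.
Proof. by move=> [R T] [R' T'] [/(congr1 (@negv E))]; rewrite !negvK => -> ->. Qed.

Lemma iter4_rho p : iter 4 rho p = p.
Proof. by case: p => R T; rewrite /= /rho /= !negvK. Qed.

Lemma iter_rho_mod k p : iter (k %% 4) rho p = iter k rho p.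
Proof.
rewrite {2}(divn_eq k 4) addnC iterD; congr (iter _ rho _).
by elim: (k %/ 4) p => [//|q IHq] p; rewrite mulSn iterD iter4_rho.
Qed.

Lemma rho_act_add (m n : 'Z_4) :
  @rho_act E (m + n)%R =1 rho_act m \o rho_act n.
Proof. by move=> p; rewrite /rho_act /= -iterD -[RHS]iter_rho_mod. Qed.

End Rho.

Definition sep_sign (x y : option bool) := (x != None) && (x == omap negb y).

(* the e-th coordinate of the two inclusions defining (T,R) <= (T',R') *)
Definition Qle_sign (t r t' r' : option bool) :=
  (sep_sign t' t ==> sep_sign t' r) && (sep_sign t' r ==> sep_sign t' r').

Lemma Qle_coordinates (E : finType) (p q : signvec E * signvec E) :
  Qle p q = [forall e, Qle_sign (p.1 e) (p.2 e) (q.1 e) (q.2 e)].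
Proof.
apply/andP/forallP => [[/subsetP sub1 /subsetP sub2] e | Qle_e].
  by apply/andP; split; apply/implyP => sep_e;
    [have := sub1 e | have := sub2 e]; rewrite !inE; apply.
split; apply/subsetP => e; have /andP[le1 le2] := Qle_e e; rewrite !inE.
  exact: implyP le1.
exact: implyP le2.
Qed.

Lemma Qle_sign_rho (t r t' r' : option bool) :
  (t == None) = (t' == None) -> (r == None) = (t' == None) ->
  (r' == None) = (t' == None) ->
  Qle_sign t r t' r' = Qle_sign (omap negb r') t' (omap negb r) t.
Proof.
by case: t => [[]|]; case: r => [[]|]; case: t' => [[]|]; case: r' => [[]|].
Qed.

Section TopePairs.
Variables (E : finType) (M : oriented_matroid E).
Local Notation rho := (@rho E).

Lemma rho_QV p : p \in QV M -> rho p \in QV M.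
Proof. by case: p => R T; rewrite !in_setX /= => /andP[RT TT]; rewrite topes_negv. Qed.

Lemma Qle_rho p q : p \in QV M -> q \in QV M -> Qle (rho p) (rho q) = Qle q p.
Proof.
case: p q => [R T] [R' T']; rewrite !in_setX /= => /andP[RT TT] /andP[RT' TT'].
rewrite !Qle_coordinates; apply: eq_forallb => e /=.
by rewrite !ffunE [RHS]Qle_sign_rho //; apply: (@topes_zero _ M).
Qed.

Lemma rho_simplicial : simplicial_automorphism (QV M) (is_chain M) rho.
Proof.
split; [exact: rho_QV | by move=> p q _ _ /rho_inj | move=> C CQ].
have rhoCQ : rho @: C \subset QV M.
  by apply/subsetP => _ /imsetP[p pC ->]; apply/rho_QV/(subsetP CQ).
rewrite /is_chain CQ rhoCQ /=; apply/forall_inP/forall_inP => comparable p pC.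
  apply/forall_inP => q qC.
  have := forall_inP (comparable _ (imset_f rho pC)) _ (imset_f rho qC).
  by rewrite !Qle_rho ?(subsetP CQ) // orbC.
case/imsetP: pC => p' p'C ->; apply/forall_inP => _ /imsetP[q' q'C ->].
by rewrite !Qle_rho ?(subsetP CQ) // orbC; apply: (forall_inP (comparable _ p'C)).
Qed.

Lemma rho_act_simplicial (n : 'Z_4) :
  simplicial_automorphism (QV M) (is_chain M) (rho_act n).
Proof. exact/simplicial_automorphism_iter/rho_simplicial. Qed.

Lemma chain_subset_QV C : is_chain M C -> C \subset QV M.
Proof. by case/andP. Qed.

End TopePairs.

Theorem theorem3p15 (E : finType) (M : oriented_matroid E) :
  (* each rho^n is a simplicial automorphism of Delta(Q) *)
  (forall n : 'Z_4,
     simplicial_automorphism (QV M) (is_chain M) (rho_act n)) /\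
  (* n |-> rho^n is an action of Z_4 on Delta(Q) *)
  {in QV M, rho_act (0 : 'Z_4)%R =1 id} /\
  (forall m n : 'Z_4, {in QV M, rho_act (m + n)%R =1 rho_act m \o rho_act n}) /\
  (* hence a simplicial action of Z_4 on |Q| *)
  (forall (R : realType) (n : 'Z_4) (x : {ffun (signvec E * signvec E) -> R}),
     in_realization (is_chain M) x ->
     in_realization (is_chain M) (realize_map (rho_act n) x)) /\
  (forall (R : realType) (x : {ffun (signvec E * signvec E) -> R}),
     in_realization (is_chain M) x -> realize_map (rho_act (0 : 'Z_4)%R) x = x) /\
  (forall (R : realType) (m n : 'Z_4) (x : {ffun (signvec E * signvec E) -> R}),
     in_realization (is_chain M) x ->
     realize_map (rho_act (m + n)%R) x
       = realize_map (rho_act m) (realize_map (rho_act n) x)).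
Proof.
split; first exact: rho_act_simplicial.
split; first by [].
split; first by move=> m n p _; apply: rho_act_add.
split.
  move=> R n x; apply: in_realization_map (rho_act_simplicial M n).
  exact: chain_subset_QV.
split; first by move=> R x _; apply: realize_map_id.
by move=> R m n x _; rewrite (eq_realize_map _ (rho_act_add m n)) realize_map_comp.
Qed.
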